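(* Let $a=0.68$, $b=0.1$, $\omega\in\mathbb{R}$ and $0<\varepsilon\le\frac12$, and consider the rotating Hénon map $F_\varepsilon:\mathbb{T}^1\times\mathbb{R}^2\to\mathbb{T}^1\times\mathbb{R}^2$, $$F_\varepsilon(\theta,x,y)=\big(\theta+\omega \ (\mathrm{mod}\ 1),\ 1+y-ax^2+\varepsilon\cos(2\pi\theta),\ bx\big).$$ Let $$x_-=\frac{-(1-b)-\sqrt{(1-b)^2+4a}}{2a},\qquad y_-=bx_-,$$ and $$U_\varepsilon=\mathbb{T}^1\times[x_--1.1\varepsilon,\,x_-+1.1\varepsilon]\times[y_--0.12\varepsilon,\,y_-+0.12\varepsilon].$$ Then there exists an invariant $C^0$ manifold of $F_\varepsilon$ which is homeomorphic to $\mathbb{T}^1$ and is contained in $U_\varepsilon$.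
   Context: $\mathbb{T}^1=\mathbb{R}/\mathbb{Z}$. The point $(x_-,y_-)$ is a fixed point of the Hénon map $(x,y)\mapsto(1+y-ax^2,bx)$ ($x_-\approx-2.0433$). *)

From Stdlib Require Import Reals Lra.
Open Scope R_scope.

Definition in_Z (r : R) : Prop := exists k : Z, r = IZR k.

Definition henon_a : R := 68 / 100.
Definition henon_b : R := 1 / 10.

(* the fixed point (x_-, y_-) of the unperturbed Hénon map *)
Definition x_minus : R :=
  (- (1 - henon_b) - sqrt ((1 - henon_b) ^ 2 + 4 * henon_a)) / (2 * henon_a).
Definition y_minus : R := henon_b * x_minus.

(* Points of T^1 x R^2 are represented by triples (theta, x, y) in R^3,
   the first coordinate being a lift of the angle in T^1 = R/Z. *)
Definition pt := (R * R * R)%type.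

Definition theta_of (p : pt) : R := fst (fst p).
Definition x_of (p : pt) : R := snd (fst p).
Definition y_of (p : pt) : R := snd p.

Definition same_point (p q : pt) : Prop :=
  in_Z (theta_of p - theta_of q) /\ x_of p = x_of q /\ y_of p = y_of q.

(* the rotating Hénon map F_eps (well defined on T^1 x R^2, since
   cos(2 pi theta) is 1-periodic) *)
Definition F (omega eps : R) (p : pt) : pt :=
  (theta_of p + omega,
   1 + y_of p - henon_a * (x_of p) ^ 2 + eps * cos (2 * PI * theta_of p),
   henon_b * x_of p).

Definition in_U (eps : R) (p : pt) : Prop :=
  x_minus - 11/10 * eps <= x_of p <= x_minus + 11/10 * eps /\
  y_minus - 12/100 * eps <= y_of p <= y_minus + 12/100 * eps.

(* gamma : R -> R^3 is the lift of a topological embedding of the circle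
   T^1 = R/Z into T^1 x R^2: continuous, and two parameters give the same
   point of T^1 x R^2 iff they are equal modulo 1.  (Continuous injective
   maps from the compact T^1 to the Hausdorff T^1 x R^2 are homeomorphisms
   onto their image, and every continuous map T^1 -> T^1 x R^2 has such a
   continuous lift.) *)
Definition circle_embedding (gamma : R -> pt) : Prop :=
  continuity (fun s => theta_of (gamma s)) /\
  continuity (fun s => x_of (gamma s)) /\
  continuity (fun s => y_of (gamma s)) /\
  (forall s t, same_point (gamma s) (gamma t) <-> in_Z (s - t)).

Definition invariant_image (omega eps : R) (gamma : R -> pt) : Prop :=
  (forall s, exists t, same_point (F omega eps (gamma s)) (gamma t)) /\
  (forall t, exists s, same_point (F omega eps (gamma s)) (gamma t)).

(* The invariant circle is sought as a graph
   theta |-> (theta, x(theta), b x(theta - omega)).  Such a graph is F_eps-invariant iff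
     x(theta + omega) = 1 + b x(theta - omega) - a x(theta)^2 + eps cos(2 pi theta),
   and solving for x(theta) on the branch through x_- turns this into the fixed-point
   equation x = T x, T x(theta) = - sqrt ((1 + b x(theta - omega) + eps cos(2 pi theta)
   - x(theta + omega)) / a).  On the sup-norm ball of radius 1.1 eps around the constant
   x_- the radicand stays >= 9/4, so T maps the ball into itself and is a 3/5-contraction
   there.  The iterates of T from x_- converge uniformly to a continuous fixed point, and
   uniqueness of the fixed point makes it 1-periodic, i.e. a function on T^1. *)

From Stdlib Require Import Reals Lra Lia.
Open Scope R_scope.

Lemma Rabs_le_inv (x a : R) : Rabs x <= a -> - a <= x <= a.
Proof. unfold Rabs; destruct (Rcase_abs x); lra. Qed.

Lemma Rabs_sub_triang (a b c : R) : Rabs (a - c) <= Rabs (a - b) + Rabs (b - c).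
Proof. replace (a - c) with ((a - b) + (b - c)) by ring; apply Rabs_triang. Qed.

Lemma geometric_term_small (K q eps : R) :
  0 <= K -> 0 <= q < 1 -> 0 < eps -> exists N, K * q ^ N < eps.
Proof.
  intros HK Hq Heps.
  assert (Hpos : 0 < eps / (K + 1)) by (apply Rdiv_lt_0_compat; lra).
  destruct (pow_lt_1_zero q ltac:(rewrite Rabs_right; lra) _ Hpos) as [N HN].
  exists N; specialize (HN N (le_n N)).
  assert (HqN : 0 <= q ^ N) by (apply pow_le; lra).
  rewrite Rabs_right in HN by lra.
  assert (HKN : (K + 1) * q ^ N < (K + 1) * (eps / (K + 1)))
    by (apply Rmult_lt_compat_l; lra).
  replace ((K + 1) * (eps / (K + 1))) with eps in HKN by (field; lra).
  nra.
Qed.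

Lemma le_of_le_add_pow (a b K q : R) :
  0 <= q < 1 -> (forall n, a <= b + K * q ^ n) -> a <= b.
Proof.
  intros Hq Hab; apply Rle_plus_epsilon; intros eps Heps.
  destruct (Rle_lt_dec K 0) as [HK | HK].
  - specialize (Hab 0%nat); simpl in Hab; lra.
  - destruct (geometric_term_small K q eps ltac:(lra) Hq Heps) as [N HN].
    specialize (Hab N); lra.
Qed.

Section GeometricCauchy.

Variables (u : nat -> R) (C q : R).
Hypothesis q_range : 0 <= q < 1.
Hypothesis u_increments : forall n, Rabs (u (S n) - u n) <= C * q ^ n.

Lemma geometric_constant_nonneg : 0 <= C / (1 - q).
Proof.
  assert (HC : 0 <= C).
  { specialize (u_increments 0%nat); simpl in u_increments.
    pose proof (Rabs_pos (u 1%nat - u 0%nat)); lra. }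
  apply Rmult_le_pos; [exact HC | apply Rlt_le, Rinv_0_lt_compat; lra].
Qed.

Lemma geometric_increments_dist_tail n k :
  Rabs (u (n + k)%nat - u n) <= C / (1 - q) * q ^ n * (1 - q ^ k).
Proof.
  induction k as [|k IH].
  - rewrite Nat.add_0_r, Rminus_diag, Rabs_R0; simpl; lra.
  - rewrite Nat.add_succ_r.
    eapply Rle_trans; [apply (Rabs_sub_triang _ (u (n + k)%nat))|].
    replace (C / (1 - q) * q ^ n * (1 - q ^ S k))
      with (C * q ^ (n + k) + C / (1 - q) * q ^ n * (1 - q ^ k))
      by (rewrite pow_add; simpl; field; lra).
    specialize (u_increments (n + k)); lra.
Qed.

Lemma geometric_increments_dist n m :
  (n <= m)%nat -> Rabs (u m - u n) <= C / (1 - q) * q ^ n.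
Proof.
  intros Hnm; replace m with (n + (m - n))%nat by lia.
  eapply Rle_trans; [apply geometric_increments_dist_tail|].
  assert (0 <= C / (1 - q) * q ^ n)
    by (apply Rmult_le_pos; [apply geometric_constant_nonneg|apply pow_le; lra]).
  assert (0 <= q ^ (m - n)) by (apply pow_le; lra).
  nra.
Qed.

Lemma geometric_increments_limit :
  {l | forall n, Rabs (l - u n) <= C / (1 - q) * q ^ n}.
Proof.
  assert (Hcauchy : Cauchy_crit u).
  { intros eps Heps.
    destruct (geometric_term_small (C / (1 - q)) q (eps / 2)
                geometric_constant_nonneg q_range ltac:(lra)) as [N HN].
    exists N; intros n m Hn Hm; unfold R_dist.
    pose proof (geometric_increments_dist N n Hn) as HnN.
    pose proof (geometric_increments_dist N m Hm) as HmN.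
    pose proof (Rabs_sub_triang (u n) (u N) (u m)) as Htri.
    rewrite (Rabs_minus_sym (u N)) in Htri; lra. }
  destruct (R_complete u Hcauchy) as [l Hl]; exists l; intros n.
  apply Rle_plus_epsilon; intros eps Heps.
  destruct (Hl eps Heps) as [N HN].
  specialize (HN (max N n) (Nat.le_max_l N n)); unfold R_dist in HN.
  pose proof (geometric_increments_dist n (max N n) (Nat.le_max_r N n)) as Hmax.
  pose proof (Rabs_sub_triang l (u (max N n)) (u n)) as Htri.
  rewrite (Rabs_minus_sym l (u (max N n))) in Htri; lra.
Qed.

End GeometricCauchy.

Lemma pow_le_pow_of_le_1 (q : R) (m n : nat) :
  0 <= q <= 1 -> (m <= n)%nat -> q ^ n <= q ^ m.
Proof.
  intros Hq Hmn; induction Hmn as [|n _ IH]; [lra|].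
  simpl; assert (0 <= q ^ n) by (apply pow_le; lra); nra.
Qed.

Lemma continuity_geometric_limit (fn : nat -> R -> R) (f : R -> R) (K q : R) :
  0 <= K -> 0 <= q < 1 -> (forall n, continuity (fn n)) ->
  (forall n t, Rabs (f t - fn n t) <= K * q ^ n) -> continuity f.
Proof.
  intros HK Hq Hfn Hf t.
  apply (CVU_continuity fn f t (mkposreal 1 Rlt_0_1)).
  - intros eps Heps.
    destruct (geometric_term_small K q eps HK Hq Heps) as [N HN].
    exists N; intros n y Hn _.
    assert (Hpow : q ^ n <= q ^ N) by (apply pow_le_pow_of_le_1; [lra | exact Hn]).
    specialize (Hf n y); nra.
  - intros n y _; apply Hfn.
  - apply Boule_center.
Qed.

Definition in_sup_ball (c r : R) (X : R -> R) : Prop := forall t, Rabs (X t - c) <= r.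

Lemma in_sup_ball_bounds (c r : R) (X : R -> R) t :
  in_sup_ball c r X -> c - r <= X t <= c + r.
Proof. intros HX; pose proof (Rabs_le_inv _ _ (HX t)); lra. Qed.

Lemma in_sup_ball_dist (c r : R) (X Y : R -> R) :
  in_sup_ball c r X -> in_sup_ball c r Y -> forall t, Rabs (X t - Y t) <= 2 * r.
Proof.
  intros HX HY t.
  pose proof (in_sup_ball_bounds c r X t HX); pose proof (in_sup_ball_bounds c r Y t HY).
  apply Rabs_le; lra.
Qed.

Section SupContraction.

Variables (T : (R -> R) -> R -> R) (c r q : R).
Hypothesis r_nonneg : 0 <= r.
Hypothesis q_range : 0 <= q < 1.
Hypothesis T_maps_ball : forall X, in_sup_ball c r X -> in_sup_ball c r (T X).
Hypothesis T_contraction : forall X Y d,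
  in_sup_ball c r X -> in_sup_ball c r Y -> (forall t, Rabs (X t - Y t) <= d) ->
  forall t, Rabs (T X t - T Y t) <= q * d.
Hypothesis T_continuity : forall X,
  in_sup_ball c r X -> continuity X -> continuity (T X).

Let iterate (n : nat) : R -> R := Nat.iter n T (fun _ => c).

Lemma iterate_in_ball n : in_sup_ball c r (iterate n).
Proof.
  induction n as [|n IH].
  - intro t; simpl; rewrite Rminus_diag, Rabs_R0; exact r_nonneg.
  - exact (T_maps_ball _ IH).
Qed.

Lemma iterate_increment n t : Rabs (iterate (S n) t - iterate n t) <= 2 * r * q ^ n.
Proof.
  revert t; induction n as [|n IH]; intro t.
  - rewrite pow_O, Rmult_1_r; apply (in_sup_ball_dist c); apply iterate_in_ball.
  - rewrite <- tech_pow_Rmult.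
    replace (2 * r * (q * q ^ n)) with (q * (2 * r * q ^ n)) by ring.
    exact (T_contraction _ _ _ (iterate_in_ball (S n)) (iterate_in_ball n) IH t).
Qed.

Let limit (t : R) : R :=
  proj1_sig (geometric_increments_limit (fun n => iterate n t) (2 * r) q q_range
               (fun n => iterate_increment n t)).

Lemma limit_near_iterate n t : Rabs (limit t - iterate n t) <= 2 * r / (1 - q) * q ^ n.
Proof. unfold limit; destruct geometric_increments_limit as [l Hl]; apply Hl. Qed.

Lemma limit_in_ball : in_sup_ball c r limit.
Proof.
  intro t; apply (le_of_le_add_pow _ _ (2 * r / (1 - q)) q q_range); intro n.
  pose proof (limit_near_iterate n t); pose proof (iterate_in_ball n t).
  pose proof (Rabs_sub_triang (limit t) (iterate n t) c); lra.
Qed.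

Lemma limit_fixed t : T limit t = limit t.
Proof.
  set (K := 2 * r / (1 - q)).
  assert (Hdist : Rabs (T limit t - limit t) <= 0).
  { apply (le_of_le_add_pow _ _ (2 * K * q) q q_range); intro n.
    assert (Hlim : forall s, Rabs (limit s - iterate n s) <= K * q ^ n)
      by apply limit_near_iterate.
    pose proof (T_contraction _ _ _ limit_in_ball (iterate_in_ball n) Hlim t) as HT.
    pose proof (limit_near_iterate (S n) t) as Hnext.
    change (iterate (S n) t) with (T (iterate n) t) in Hnext; simpl in Hnext.
    pose proof (Rabs_sub_triang (T limit t) (T (iterate n) t) (limit t)) as Htri.
    rewrite (Rabs_minus_sym (T (iterate n) t) (limit t)) in Htri; fold K in Hnext; nra. }
  pose proof (Rabs_le_inv _ _ Hdist); lra.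
Qed.

Lemma sup_contraction_fixpoint :
  exists X, in_sup_ball c r X /\ continuity X /\ forall t, T X t = X t.
Proof.
  exists limit; split; [exact limit_in_ball | split; [|exact limit_fixed]].
  apply (continuity_geometric_limit iterate limit (2 * r / (1 - q)) q); auto.
  - apply (geometric_constant_nonneg (fun n => iterate n 0) (2 * r) q q_range).
    intro n; apply iterate_increment.
  - intro n; induction n as [|n IH].
    + intro t; apply continuity_const; intros ? ?; reflexivity.
    + apply T_continuity; [apply iterate_in_ball | exact IH].
  - exact limit_near_iterate.
Qed.

Lemma sup_contraction_unique X Y :
  in_sup_ball c r X -> in_sup_ball c r Y ->
  (forall t, T X t = X t) -> (forall t, T Y t = Y t) -> forall t, X t = Y t.
Proof.
  intros HX HY HTX HTY.
  assert (Hn : forall n t, Rabs (X t - Y t) <= 2 * r * q ^ n).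
  { induction n as [|n IH]; intro t.
    - rewrite pow_O, Rmult_1_r; exact (in_sup_ball_dist c r X Y HX HY t).
    - rewrite <- HTX, <- HTY, <- tech_pow_Rmult.
      replace (2 * r * (q * q ^ n)) with (q * (2 * r * q ^ n)) by ring.
      exact (T_contraction _ _ _ HX HY IH t). }
  intro t.
  assert (Hdist : Rabs (X t - Y t) <= 0)
    by (apply (le_of_le_add_pow _ _ (2 * r) q q_range); intro n;
        rewrite Rplus_0_l; apply Hn).
  pose proof (Rabs_le_inv _ _ Hdist); lra.
Qed.

End SupContraction.

Lemma x_minus_bounds : -205/100 <= x_minus <= -204/100.
Proof.
  unfold x_minus, henon_a, henon_b.
  set (s := sqrt _).
  assert (Hs : 0 <= s /\ s * s = 353/100)
    by (split; [apply sqrt_pos | unfold s; rewrite sqrt_sqrt; lra]).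
  assert (1878/1000 <= s <= 1879/1000) by nra.
  replace ((- (1 - 1 / 10) - s) / (2 * (68 / 100))) with ((-90 - 100 * s) / 136) by field.
  lra.
Qed.

Lemma x_minus_fixed : x_minus = 1 + henon_b * x_minus - henon_a * x_minus ^ 2.
Proof.
  unfold x_minus, henon_a, henon_b.
  set (s := sqrt _).
  assert (Hs : s * s = 353/100) by (unfold s; rewrite sqrt_sqrt; lra).
  field_simplify; nra.
Qed.

Lemma le_sqrt_of_sqr_le (m u : R) : 0 <= m -> m * m <= u -> m <= sqrt u.
Proof. intros Hm Hmu; rewrite <- (sqrt_square m Hm); apply sqrt_le_1_alt, Hmu. Qed.

Lemma sqrt_dist_le (u v m : R) :
  0 <= u -> 0 <= v -> m <= sqrt u + sqrt v -> m * Rabs (sqrt u - sqrt v) <= Rabs (u - v).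
Proof.
  intros Hu Hv Hm.
  replace (u - v) with ((sqrt u - sqrt v) * (sqrt u + sqrt v))
    by (pose proof (sqrt_sqrt u Hu); pose proof (sqrt_sqrt v Hv); nra).
  pose proof (sqrt_pos u); pose proof (sqrt_pos v).
  rewrite Rabs_mult, (Rabs_right (sqrt u + sqrt v)) by lra.
  rewrite Rmult_comm; apply Rmult_le_compat_l; [apply Rabs_pos | exact Hm].
Qed.

Lemma continuity_shift (X : R -> R) (c : R) :
  continuity X -> continuity (fun t => X (t + c)).
Proof.
  intros HX t; apply (continuity_pt_comp (fun t => t + c) X); [|apply HX].
  apply continuity_pt_plus; [apply derivable_continuous_pt, derivable_pt_id |].
  apply continuity_pt_const; intros ? ?; reflexivity.
Qed.

Lemma continuity_cos_2PI : continuity (fun t => cos (2 * PI * t)).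
Proof.
  apply (continuity_comp (fun t => 2 * PI * t) cos); [|apply continuity_cos].
  apply (continuity_scal id), derivable_continuous, derivable_id.
Qed.

Section HenonGraphOperator.

Variables omega eps : R.
Hypothesis eps_pos : 0 < eps.
Hypothesis eps_le_half : eps <= 1/2.

Definition henon_radicand (X : R -> R) (t : R) : R :=
  (1 + henon_b * X (t - omega) + eps * cos (2 * PI * t) - X (t + omega)) / henon_a.

Definition henon_graph_operator (X : R -> R) (t : R) : R := - sqrt (henon_radicand X t).

Local Notation near_x_minus := (in_sup_ball x_minus (11/10 * eps)).

Lemma eps_cos_bounds t : - eps <= eps * cos (2 * PI * t) <= eps.
Proof. pose proof (COS_bound (2 * PI * t)); nra. Qed.

Lemma henon_radicand_lower X t : near_x_minus X -> 9/4 <= henon_radicand X t.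
Proof.
  intros HX; unfold henon_radicand.
  pose proof (in_sup_ball_bounds _ _ _ (t - omega) HX).
  pose proof (in_sup_ball_bounds _ _ _ (t + omega) HX).
  pose proof (eps_cos_bounds t); pose proof x_minus_bounds.
  unfold henon_a, henon_b in *; lra.
Qed.

Lemma henon_radicand_near X t :
  near_x_minus X -> Rabs (henon_radicand X t - x_minus * x_minus) <= 325/100 * eps.
Proof.
  intros HX; unfold henon_radicand.
  pose proof (in_sup_ball_bounds _ _ _ (t - omega) HX).
  pose proof (in_sup_ball_bounds _ _ _ (t + omega) HX).
  pose proof (eps_cos_bounds t).
  assert (Hsq : henon_a * (x_minus * x_minus) = 1 - (1 - henon_b) * x_minus)
    by (pose proof x_minus_fixed; simpl in *; lra).
  replace (x_minus * x_minus) with ((1 - (1 - henon_b) * x_minus) / henon_a)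
    by (rewrite <- Hsq; unfold henon_a; field).
  apply Rabs_le; unfold henon_a, henon_b in *; lra.
Qed.

Lemma henon_radicand_dist X Y d t :
  (forall s, Rabs (X s - Y s) <= d) ->
  Rabs (henon_radicand X t - henon_radicand Y t) <= 55/34 * d.
Proof.
  intros Hd; unfold henon_radicand.
  pose proof (Rabs_le_inv _ _ (Hd (t - omega))).
  pose proof (Rabs_le_inv _ _ (Hd (t + omega))).
  apply Rabs_le; unfold henon_a, henon_b; lra.
Qed.

Lemma henon_graph_operator_maps_ball X :
  near_x_minus X -> near_x_minus (henon_graph_operator X).
Proof.
  intros HX t; unfold henon_graph_operator.
  set (A := henon_radicand X t).
  pose proof (henon_radicand_lower X t HX) as Hlow; fold A in Hlow.
  pose proof (le_sqrt_of_sqr_le (3/2) A ltac:(lra) ltac:(lra)) as HsqrtA.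
  pose proof x_minus_bounds.
  assert (Hxm : sqrt (x_minus * x_minus) = - x_minus).
  { replace (x_minus * x_minus) with (- x_minus * - x_minus) by ring.
    apply sqrt_square; lra. }
  replace (- sqrt A - x_minus) with (- (sqrt A - sqrt (x_minus * x_minus)))
    by (rewrite Hxm; ring).
  rewrite Rabs_Ropp.
  pose proof (sqrt_dist_le A (x_minus * x_minus) (354/100) ltac:(lra) ltac:(nra)
                ltac:(rewrite Hxm; lra)) as Hdist.
  pose proof (henon_radicand_near X t HX) as Hnear; fold A in Hnear.
  pose proof (Rabs_pos (sqrt A - sqrt (x_minus * x_minus))); nra.
Qed.

Lemma henon_graph_operator_contraction X Y d :
  near_x_minus X -> near_x_minus Y -> (forall s, Rabs (X s - Y s) <= d) ->
  forall t, Rabs (henon_graph_operator X t - henon_graph_operator Y t) <= 3/5 * d.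
Proof.
  intros HX HY Hd t; unfold henon_graph_operator.
  pose proof (henon_radicand_lower X t HX); pose proof (henon_radicand_lower Y t HY).
  pose proof (le_sqrt_of_sqr_le (3/2) (henon_radicand X t) ltac:(lra) ltac:(lra)).
  pose proof (le_sqrt_of_sqr_le (3/2) (henon_radicand Y t) ltac:(lra) ltac:(lra)).
  pose proof (sqrt_dist_le (henon_radicand X t) (henon_radicand Y t) 3
                ltac:(lra) ltac:(lra) ltac:(lra)).
  pose proof (henon_radicand_dist X Y d t Hd).
  pose proof (Rle_trans _ _ _ (Rabs_pos _) (Hd t)).
  replace (- sqrt (henon_radicand X t) - - sqrt (henon_radicand Y t))
    with (- (sqrt (henon_radicand X t) - sqrt (henon_radicand Y t))) by ring.
  rewrite Rabs_Ropp; lra.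
Qed.

Lemma henon_graph_operator_continuity X :
  near_x_minus X -> continuity X -> continuity (henon_graph_operator X).
Proof.
  intros HX HXc t.
  assert (Hrad : continuity (henon_radicand X)).
  { unfold henon_radicand, Rdiv.
    apply (continuity_mult _ (fun _ => / henon_a));
      [|apply continuity_const; intros ? ?; reflexivity].
    apply continuity_minus; [|apply continuity_shift, HXc].
    apply continuity_plus; [apply continuity_plus|].
    - apply continuity_const; intros ? ?; reflexivity.
    - apply (continuity_scal (fun t => X (t - omega))), continuity_shift, HXc.
    - apply (continuity_scal (fun t => cos (2 * PI * t))), continuity_cos_2PI. }
  apply (continuity_pt_comp (henon_radicand X) (fun u => - sqrt u)); [apply Hrad|].
  apply (continuity_pt_opp sqrt), continuity_pt_sqrt.
  pose proof (henon_radicand_lower X t HX); lra.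
Qed.

Lemma henon_graph_operator_shift X t :
  henon_graph_operator (fun s => X (s + 1)) t = henon_graph_operator X (t + 1).
Proof.
  unfold henon_graph_operator, henon_radicand.
  replace (2 * PI * (t + 1)) with (2 * PI * t + 2 * INR 1 * PI) by (simpl; ring).
  rewrite cos_period.
  replace (t - omega + 1) with (t + 1 - omega) by ring.
  replace (t + omega + 1) with (t + 1 + omega) by ring.
  reflexivity.
Qed.

Lemma henon_graph_operator_fixed_eq X s :
  near_x_minus X -> henon_graph_operator X s = X s ->
  X (s + omega) = 1 + henon_b * X (s - omega) - henon_a * X s ^ 2 + eps * cos (2 * PI * s).
Proof.
  intros HX Hfix.
  assert (Hsq : X s ^ 2 = henon_radicand X s).
  { rewrite <- Hfix; unfold henon_graph_operator.
    replace ((- sqrt (henon_radicand X s)) ^ 2)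
      with (sqrt (henon_radicand X s) * sqrt (henon_radicand X s)) by ring.
    apply sqrt_sqrt; pose proof (henon_radicand_lower X s HX); lra. }
  rewrite Hsq; unfold henon_radicand, henon_a; field.
Qed.

Lemma henon_graph_operator_fixpoint_periodic X :
  near_x_minus X -> (forall t, henon_graph_operator X t = X t) ->
  forall t, X (t + 1) = X t.
Proof.
  intros HX HXfix.
  apply (sup_contraction_unique henon_graph_operator x_minus (11/10 * eps) (3/5)
           ltac:(lra) henon_graph_operator_contraction); [intro t; apply HX | exact HX | |].
  - intro t; rewrite henon_graph_operator_shift; apply HXfix.
  - exact HXfix.
Qed.

End HenonGraphOperator.

Lemma periodic_IZR {A : Type} (f : R -> A) :
  (forall t, f (t + 1) = f t) -> forall (k : Z) t, f (t + IZR k) = f t.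
Proof.
  intros H1 k; induction k as [|k IH|k IH] using Z.peano_ind; intro t.
  - now rewrite Rplus_0_r.
  - rewrite succ_IZR, <- Rplus_assoc, H1; apply IH.
  - rewrite <- (IH t), <- (H1 (t + IZR (Z.pred k))), <- Z.sub_1_r, minus_IZR.
    f_equal; simpl; ring.
Qed.

Definition henon_graph (omega : R) (X : R -> R) (s : R) : pt :=
  (s, X s, henon_b * X (s - omega)).

Lemma henon_graph_circle_embedding omega X :
  continuity X -> (forall k t, X (t + IZR k) = X t) ->
  circle_embedding (henon_graph omega X).
Proof.
  intros HXc Hper; unfold circle_embedding, henon_graph, theta_of, x_of, y_of; simpl.
  split; [apply derivable_continuous, derivable_id|].
  split; [exact HXc|].
  split; [apply (continuity_scal (fun s => X (s - omega))), continuity_shift, HXc|].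
  intros s t; unfold same_point, theta_of, x_of, y_of; simpl; split.
  - intros [Hk _]; exact Hk.
  - intros [k Hk]; split; [exists k; exact Hk|].
    replace s with (t + IZR k) by lra.
    replace (t + IZR k - omega) with (t - omega + IZR k) by ring.
    rewrite !Hper; split; reflexivity.
Qed.

Lemma henon_graph_invariant omega eps X :
  (forall s, X (s + omega)
             = 1 + henon_b * X (s - omega) - henon_a * X s ^ 2 + eps * cos (2 * PI * s)) ->
  invariant_image omega eps (henon_graph omega X).
Proof.
  intros HX.
  unfold invariant_image, same_point, F, henon_graph, theta_of, x_of, y_of; simpl.
  split.
  - intros s; exists (s + omega).
    replace (s + omega - omega) with s by ring.
    rewrite HX; split; [exists 0%Z; simpl; ring | split; reflexivity].
  - intros t; exists (t - omega).
    pose proof (HX (t - omega)) as Ht.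
    replace (t - omega + omega) with t in Ht by ring.
    rewrite Ht; split; [exists 0%Z; simpl; ring | split; reflexivity].
Qed.

Lemma henon_graph_in_U omega eps X :
  in_sup_ball x_minus (11/10 * eps) X -> forall s, in_U eps (henon_graph omega X s).
Proof.
  intros HX s; unfold in_U, henon_graph, x_of, y_of, y_minus; simpl.
  pose proof (in_sup_ball_bounds _ _ _ s HX).
  pose proof (in_sup_ball_bounds _ _ _ (s - omega) HX).
  unfold henon_b; lra.
Qed.

Theorem mainTheorem8 (omega eps : R) (Heps0 : 0 < eps) (Heps1 : eps <= 1/2) :
  exists gamma : R -> pt,
    circle_embedding gamma /\
    invariant_image omega eps gamma /\
    (forall s, in_U eps (gamma s)).
Proof.
  destruct (sup_contraction_fixpoint (henon_graph_operator omega eps) x_minus (11/10 * eps)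
              (3/5) ltac:(lra) ltac:(lra)
              (henon_graph_operator_maps_ball omega eps Heps0 Heps1)
              (henon_graph_operator_contraction omega eps Heps0 Heps1)
              (henon_graph_operator_continuity omega eps Heps0 Heps1))
    as [X [HXball [HXcont HXfix]]].
  pose proof (henon_graph_operator_fixpoint_periodic omega eps Heps0 Heps1 X HXball HXfix)
    as Hper.
  exists (henon_graph omega X); split; [|split].
  - exact (henon_graph_circle_embedding omega X HXcont (periodic_IZR X Hper)).
  - apply henon_graph_invariant; intro s.
    exact (henon_graph_operator_fixed_eq omega eps Heps0 Heps1 X s HXball (HXfix s)).
  - exact (henon_graph_in_U omega eps X HXball).
Qed.
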